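(* For every measurement assemblage $\vec B$ on $\mathcal H$, $$\mathbb{IR}^{\rm JM}(\vec B)=\max_{\rho_B}\mathbb{SR}^{\rm C\text{-}LHS}\big(\rho_B^{1/2}\vec B\rho_B^{1/2}\big),$$ where the maximum is over density operators $\rho_B$ on $\mathcal H$. Moreover, every full-rank density operator $\rho_B$ attains the maximum.
   Context: All Hilbert spaces are finite-dimensional. A measurement assemblage (MA) on $\mathcal H$ is a family $\vec M=\{M_{a|x}\}_{a,x}$, with $x$ ranging over a finite input set and $a$ over a finite outcome set $\mathcal A$, such that for each $x$, $\{M_{a|x}\}_a$ is a POVM. $\vec M$ is jointly measurable, written $\vec M\in\mathbb{JM}$, if there exist a finite POVM $\{G_\lambda\}_\lambda$ and conditional probability distributions $p(a|x,\lambda)$ with $M_{a|x}=\sum_\lambda p(a|x,\lambda)G_\lambda$ for all $a,x$. A state assemblage (SA) on $\mathcal H$ is a family $\vec\sigma=\{\sigma_{a|x}\}_{a,x}$ of positive semidefinite operators such that $\sum_a\sigma_{a|x}=\rho$ is independent of $x$ and $\mathrm{tr}\rho=1$; $\rho$ is called its reduced state. $\vec\sigma$ admits a local hidden state model, written $\vec\sigma\in\mathbb{LHS}$, if $\sigma_{a|x}=\sum_\lambda p(\lambda)p(a|x,\lambda)\rho_\lambda$ for some finite probability distribution $p(\lambda)$, conditional distributions $p(a|x,\lambda)$ and density operators $\rho_\lambda$. JM incompatibility robustness: $\mathbb{IR}^{\rm JM}(\vec M)=\min\{t\ge0:\exists\ \vec D',\vec D\in\mathbb{JM}$ with $(M_{a|x}+tD'_{a|x})/(1+t)=D_{a|x}\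 \forall a,x\}$. Consistent LHS steering robustness of an SA $\vec\sigma$ with reduced state $\rho$: $\mathbb{SR}^{\rm C\text{-}LHS}(\vec\sigma)=\min\{t\ge0:\exists\ \vec\tau',\vec\tau\in\mathbb{LHS}$, both with reduced state $\rho$, with $(\sigma_{a|x}+t\tau'_{a|x})/(1+t)=\tau_{a|x}\ \forall a,x\}$. For a density operator $\rho$ and an MA $\vec B$, $\rho^{1/2}\vec B\rho^{1/2}$ denotes the SA $\{\rho^{1/2}B_{a|x}\rho^{1/2}\}_{a,x}$, with reduced state $\rho$. *)

From mathcomp Require Import all_boot all_order all_algebra.
From mathcomp Require Import complex.
From mathcomp Require Import reals boolp.
Set Implicit Arguments.
Unset Strict Implicit.
Unset Printing Implicit Defensive.
Import GRing.Theory Num.Theory.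
Local Open Scope ring_scope.
Local Open Scope complex_scope.

Section QDefs.
Variable R : realType.
Local Notation C := R[i].

Definition adjm (m n : nat) (M : 'M[C]_(m, n)) : 'M[C]_(n, m) :=
  map_mx Num.conj (M^T).

Definition psd (n : nat) (M : 'M[C]_n) : Prop :=
  adjm M = M /\ forall v : 'cV[C]_n, 0 <= (adjm v *m M *m v) 0 0.

Definition density (n : nat) (rho : 'M[C]_n) : Prop :=
  psd rho /\ \tr rho = 1.

(* the (unique) positive semidefinite square root rho^{1/2}, chosen classically *)
Definition psd_sqrt (n : nat) (rho : 'M[C]_n) : 'M[C]_n :=
  match pselect (exists S : 'M[C]_n, psd S /\ S *m S = rho) with
  | left h => proj1_sig (cid h)
  | right _ => 0
  end.

Definition cond_prob (X L A : finType) (p : X -> L -> A -> R) : Prop :=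
  (forall x l a, 0 <= p x l a) /\ (forall x l, \sum_(a : A) p x l a = 1).

(* measurement assemblage: M x a is M_{a|x} *)
Definition is_MA (n : nat) (X A : finType) (M : X -> A -> 'M[C]_n) : Prop :=
  (forall x a, psd (M x a)) /\ (forall x, \sum_(a : A) M x a = 1%:M).

(* jointly measurable MA (finite parent POVM indexed by 'I_k) *)
Definition is_JM (n : nat) (X A : finType) (M : X -> A -> 'M[C]_n) : Prop :=
  is_MA M /\
  exists (k : nat) (G : 'I_k -> 'M[C]_n) (p : X -> 'I_k -> A -> R),
    (forall l, psd (G l)) /\ \sum_(l < k) G l = 1%:M /\ cond_prob p /\
    forall x a, M x a = \sum_(l < k) (p x l a)%:C *: G l.

(* state assemblage with reduced state rho: sig x a is sigma_{a|x} *)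
Definition is_SA (n : nat) (X A : finType) (sig : X -> A -> 'M[C]_n)
    (rho : 'M[C]_n) : Prop :=
  (forall x a, psd (sig x a)) /\ (forall x, \sum_(a : A) sig x a = rho) /\
  \tr rho = 1.

Definition is_LHS (n : nat) (X A : finType) (sig : X -> A -> 'M[C]_n)
    (rho : 'M[C]_n) : Prop :=
  is_SA sig rho /\
  exists (k : nat) (q : 'I_k -> R) (p : X -> 'I_k -> A -> R)
         (rl : 'I_k -> 'M[C]_n),
    (forall l, 0 <= q l) /\ \sum_(l < k) q l = 1 /\ cond_prob p /\
    (forall l, density (rl l)) /\
    forall x a, sig x a = \sum_(l < k) (q l * p x l a)%:C *: rl l.

(* JM incompatibility robustness (the minimum, taken as the infimum) *)
Definition IR_JM (n : nat) (X A : finType) (M : X -> A -> 'M[C]_n) : R :=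
  inf (fun t : R => 0 <= t /\
    exists D' D : X -> A -> 'M[C]_n, is_JM D' /\ is_JM D /\
      forall x a, ((1 + t)^-1)%:C *: (M x a + t%:C *: D' x a) = D x a).

Definition SR_CLHS (n : nat) (X A : finType) (sig : X -> A -> 'M[C]_n)
    (rho : 'M[C]_n) : R :=
  inf (fun t : R => 0 <= t /\
    exists tau' tau : X -> A -> 'M[C]_n, is_LHS tau' rho /\ is_LHS tau rho /\
      forall x a, ((1 + t)^-1)%:C *: (sig x a + t%:C *: tau' x a) = tau x a).

Definition sandwich (n : nat) (X A : finType) (rho : 'M[C]_n)
    (B : X -> A -> 'M[C]_n) : X -> A -> 'M[C]_n :=
  fun x a => psd_sqrt rho *m B x a *m psd_sqrt rho.

End QDefs.

From mathcomp Require Import all_boot all_order all_algebra.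
From mathcomp Require Import complex spectral sesquilinear.
From mathcomp Require Import classical_sets reals boolp.
Import Order.TTheory GRing.Theory Num.Theory.
Set Implicit Arguments.
Unset Strict Implicit.
Unset Printing Implicit Defensive.
Local Open Scope ring_scope.
Local Open Scope complex_scope.

(* Conjugating by [S = rho^(1/2)] turns a parent POVM [G_l] of a jointly
   measurable assemblage into a local hidden state model with weights
   [tr (S G_l S)] and states [S G_l S / tr (S G_l S)], and it preserves the affine
   relation defining the robustnesses; so every admissible [t] for [IR_JM B] is
   admissible for [SR_CLHS (sandwich rho B) rho]. When [rho] has full rank,
   conjugating by [S^-1] reverses this: a model [sum_l q_l p_l rho_l] with reduced
   state [rho] yields the parent POVM [q_l S^-1 rho_l S^-1], which sums to [1].
   Both infima are then over the same nonempty set, and the maximally mixed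
   state attains the maximum. *)

Section Robustness.
Variable R : realType.
Local Notation C := R[i].

Lemma adjmM m n p (M : 'M[C]_(m, n)) (N : 'M_(n, p)) :
  adjm (M *m N) = adjm N *m adjm M.
Proof. by rewrite /adjm trmx_mul map_mxM. Qed.

Lemma adjmK m n (M : 'M[C]_(m, n)) : adjm (adjm M) = M.
Proof. by apply/matrixP => i j; rewrite !mxE conjCK. Qed.

Lemma adjmD m n (M N : 'M[C]_(m, n)) : adjm (M + N) = adjm M + adjm N.
Proof. by apply/matrixP => i j; rewrite !mxE rmorphD. Qed.

Lemma adjmZ_real m n (c : R) (M : 'M[C]_(m, n)) :
  adjm (c%:C *: M) = c%:C *: adjm M.
Proof. by apply/matrixP => i j; rewrite !mxE rmorphM; congr (_ * _); exact: conjc_real. Qed.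

Lemma adjm0 m n : adjm (0 : 'M[C]_(m, n)) = 0.
Proof. by apply/matrixP => i j; rewrite !mxE rmorph0. Qed.

Lemma adjm1 n : adjm (1%:M : 'M[C]_n) = 1%:M.
Proof. by apply/matrixP => i j; rewrite /adjm !mxE rmorph_nat eq_sym. Qed.

Lemma adjmV n (M : 'M[C]_n) : adjm (invmx M) = invmx (adjm M).
Proof. by rewrite /adjm trmx_inv map_invmx. Qed.

Lemma adjm_delta n (j : 'I_n) :
  adjm (delta_mx j 0 : 'cV[C]_n) = delta_mx 0 j.
Proof. by apply/matrixP => a b; rewrite !mxE rmorph_nat andbC. Qed.

Lemma adjm_diag_ge0 n (d : 'rV[C]_n) :
  (forall j, 0 <= d 0 j) -> adjm (diag_mx d) = diag_mx d.
Proof.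
move=> d_ge0; apply/matrixP => a b; rewrite !mxE rmorphMn eq_sym.
have [->|_] := eqVneq b a; rewrite ?mulr0n //.
by congr (_ *+ _); apply: conj_Creal; exact: ger0_real.
Qed.

Lemma adjmMm_ge0 n (v : 'cV[C]_n) : 0 <= (adjm v *m v) 0 0.
Proof.
rewrite mxE; apply: sumr_ge0 => j _; rewrite !mxE mulrC; exact: mul_conjC_ge0.
Qed.

Lemma psd_herm n (M : 'M[C]_n) : psd M -> adjm M = M.
Proof. by case. Qed.

Lemma psd_gram m n (T : 'M[C]_(m, n)) : psd (adjm T *m T).
Proof.
split=> [|v]; first by rewrite adjmM adjmK.
by rewrite mulmxA -mulmxA -adjmM; exact: adjmMm_ge0.
Qed.

Lemma psd_congr m n (M : 'M[C]_n) (S : 'M[C]_(n, m)) :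
  psd M -> psd (adjm S *m M *m S).
Proof.
case=> hM qM; split=> [|v]; first by rewrite !adjmM adjmK hM mulmxA.
by have := qM (S *m v); rewrite adjmM !mulmxA.
Qed.

Lemma psd_herm_congr n (M S : 'M[C]_n) :
  adjm S = S -> psd M -> psd (S *m M *m S).
Proof. by move=> hS; rewrite -{1}hS; exact: psd_congr. Qed.

Lemma psd0 n : psd (0 : 'M[C]_n).
Proof. by split=> [|v]; rewrite ?adjm0 // mulmx0 mul0mx mxE. Qed.

Lemma psd1 n : psd (1%:M : 'M[C]_n).
Proof. by rewrite -(mulmx1 1%:M) -{1}adjm1; exact: psd_gram. Qed.

Lemma psdD n (M N : 'M[C]_n) : psd M -> psd N -> psd (M + N).
Proof.
case=> hM qM [hN qN]; split=> [|v]; first by rewrite adjmD hM hN.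
by rewrite mulmxDr mulmxDl mxE addr_ge0.
Qed.

Lemma psd_sum n (I : Type) (r : seq I) (P : pred I) (F : I -> 'M[C]_n) :
  (forall i, P i -> psd (F i)) -> psd (\sum_(i <- r | P i) F i).
Proof.
move=> F_psd; elim/big_rec: _ => [|i M Pi]; first exact: psd0.
exact: psdD (F_psd i Pi).
Qed.

Lemma psdZ n (c : R) (M : 'M[C]_n) : 0 <= c -> psd M -> psd (c%:C *: M).
Proof.
move=> c_ge0 [hM qM]; split=> [|v]; first by rewrite adjmZ_real hM.
by rewrite -scalemxAr -scalemxAl mxE mulr_ge0 ?ler0c.
Qed.

Lemma mulmx_adjm_unitaryK m n (M : 'M[C]_(m, n)) (U : 'M[C]_n) :
  U \is unitarymx -> M *m U *m adjm U = M.
Proof. exact: mulmxtVK. Qed.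

Lemma invmx_unitary_adjm n (U : 'M[C]_n) : U \is unitarymx -> invmx U = adjm U.
Proof. exact: invmx_unitary. Qed.

Lemma psd_spectral n (M : 'M[C]_n) :
  psd M -> M = adjm (spectralmx M) *m diag_mx (spectral_diag M) *m spectralmx M.
Proof.
move=> /psd_herm hM; rewrite -invmx_unitary_adjm ?spectral_unitarymx //.
apply/orthomx_spectralP/hermitian_normalmx.
by rewrite is_hermitianmxE expr0 scale1r; apply/eqP; rewrite -[LHS]hM.
Qed.

Lemma psd_spectral_diag_ge0 n (M : 'M[C]_n) :
  psd M -> forall j, 0 <= spectral_diag M 0 j.
Proof.
move=> M_psd j; have eM := psd_spectral M_psd; have Pu := spectral_unitarymx M.
set P := spectralmx M in eM Pu *; set d := spectral_diag M in eM *.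
have := M_psd.2 (adjm P *m delta_mx j 0).
rewrite eM adjmM adjmK !mulmxA !mulmx_adjm_unitaryK // adjm_delta -colE.
by rewrite mxE mul_mx_diag !mxE !eqxx mul1r.
Qed.

(* For [M = U^* D U], the square root [U^* D^(1/2) U] is written as the Gram
   matrix of [D^(1/4) U], so that its positivity is free. *)
Lemma psd_sqrt_exists n (M : 'M[C]_n) : psd M -> exists S, psd S /\ S *m S = M.
Proof.
move=> M_psd; have d_ge0 := psd_spectral_diag_ge0 M_psd.
have eM := psd_spectral M_psd; have Pu := spectral_unitarymx M.
set P := spectralmx M in eM Pu; set d := spectral_diag M in eM d_ge0.
pose r := \row_j sqrtC (sqrtC (d 0 j)); pose s := \row_j sqrtC (d 0 j).
have r_ge0 j : 0 <= r 0 j by rewrite mxE !sqrtC_ge0.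
have rr : diag_mx r *m diag_mx r = diag_mx s.
  by rewrite mulmx_diag; congr diag_mx; apply/rowP => j; rewrite !mxE -expr2 sqrtCK.
have ss : diag_mx s *m diag_mx s = diag_mx d.
  by rewrite mulmx_diag; congr diag_mx; apply/rowP => j; rewrite !mxE -expr2 sqrtCK.
exists (adjm (diag_mx r *m P) *m (diag_mx r *m P)); split; first exact: psd_gram.
rewrite adjmM adjm_diag_ge0 // !mulmxA -(mulmxA (adjm P) (diag_mx r)) rr.
rewrite mulmx_adjm_unitaryK // -(mulmxA (adjm P *m diag_mx s)) rr.
by rewrite -(mulmxA (adjm P)) ss eM.
Qed.

Lemma psd_sqrtP n (M : 'M[C]_n) :
  psd M -> psd (psd_sqrt M) /\ psd_sqrt M *m psd_sqrt M = M.
Proof.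
move=> M_psd; rewrite /psd_sqrt; case: pselect => [e|]; first exact: proj2_sig (cid e).
by move=> /(_ (psd_sqrt_exists M_psd)).
Qed.

Lemma mxtrace_gram m n (T : 'M[C]_(m, n)) :
  \tr (adjm T *m T) = \sum_i \sum_j (T j i)^*%R * T j i.
Proof.
by apply: eq_bigr => i _; rewrite mxE; apply: eq_bigr => j _; rewrite !mxE.
Qed.

Lemma psd_tr_ge0 n (M : 'M[C]_n) : psd M -> 0 <= \tr M.
Proof.
move=> /psd_sqrtP[S_psd SS]; rewrite -SS -{1}(psd_herm S_psd) mxtrace_gram.
by do 2!apply: sumr_ge0 => ? _; rewrite mulrC mul_conjC_ge0.
Qed.

Lemma psd_tr_eq0 n (M : 'M[C]_n) : psd M -> \tr M = 0 -> M = 0.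
Proof.
move=> /psd_sqrtP[S_psd SS]; rewrite -SS -{1 3}(psd_herm S_psd) mxtrace_gram.
set S := psd_sqrt M => tr0; suff -> : S = 0 by rewrite mulmx0.
have entry_ge0 i j : 0 <= (S j i)^*%R * S j i by rewrite mulrC mul_conjC_ge0.
have col_ge0 i : 0 <= \sum_j (S j i)^*%R * S j i by apply: sumr_ge0.
apply/matrixP => j i; rewrite mxE.
have col0 := psumr_eq0P (fun i _ => col_ge0 i) tr0 (i := i) isT.
move: (psumr_eq0P (fun j _ => entry_ge0 i j) col0 (i := j) isT) => /eqP.
by rewrite mulrC mul_conjC_eq0 => /eqP.
Qed.

Lemma psd_trE n (M : 'M[C]_n) : psd M -> \tr M = (complex.Re (\tr M))%:C.
Proof. by move=> /psd_tr_ge0; case: (\tr M) => a b; rewrite lecE /= => /andP[/eqP ->]. Qed.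

Lemma psd_Re_tr_ge0 n (M : 'M[C]_n) : psd M -> 0 <= complex.Re (\tr M).
Proof. by move=> /psd_tr_ge0; case: (\tr M) => a b; rewrite lecE /= => /andP[]. Qed.

(* When [tr P = 0], hence [P = 0], any state does and [rho] is used. *)
Definition normalize_state n (rho P : 'M[C]_n) : 'M[C]_n :=
  let q := complex.Re (\tr P) in if q == 0 then rho else (q^-1)%:C *: P.

Lemma density_normalize_state n (rho P : 'M[C]_n) :
  density rho -> psd P -> density (normalize_state rho P).
Proof.
rewrite /normalize_state => rho_dens P_psd; case: eqP => // q_neq0.
split; first by apply: psdZ => //; rewrite invr_ge0 psd_Re_tr_ge0.
by rewrite mxtraceZ {2}(psd_trE P_psd) -rmorphM mulVf //; apply/eqP.
Qed.

Lemma normalize_stateK n (rho P : 'M[C]_n) :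
  psd P -> (complex.Re (\tr P))%:C *: normalize_state rho P = P.
Proof.
rewrite /normalize_state => P_psd; case: eqP => [q0|/eqP q_neq0].
  by rewrite q0 scale0r [RHS](psd_tr_eq0 P_psd) // psd_trE // q0.
by rewrite scalerA -rmorphM mulfV // scale1r.
Qed.

Lemma sandwich_sum n k (c : 'I_k -> C) (M : 'I_k -> 'M[C]_n) (S T : 'M[C]_n) :
  S *m (\sum_l c l *: M l) *m T = \sum_l c l *: (S *m M l *m T).
Proof.
rewrite mulmx_sumr mulmx_suml; apply: eq_bigr => l _.
by rewrite -scalemxAr -scalemxAl.
Qed.

Section Assemblages.
Variables (n : nat) (X A : finType).

Lemma is_JM_mixture (L : finType) (G : L -> 'M[C]_n) (p : X -> L -> A -> R) :
  (forall l, psd (G l)) -> \sum_l G l = 1%:M -> cond_prob p ->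
  is_JM (fun x a => \sum_l (p x l a)%:C *: G l).
Proof.
move=> G_psd G1 [p_ge0 p1]; split.
  split=> [x a|x]; first by apply: psd_sum => l _; apply: psdZ.
  rewrite exchange_big /= -G1; apply: eq_bigr => l _.
  by rewrite -scaler_suml -raddf_sum p1 scale1r.
exists #|L|, (fun i => G (enum_val i)), (fun x i a => p x (enum_val i) a).
split=> [i|]; first exact: G_psd.
split; first by rewrite -G1 -big_enum_val; apply: eq_bigl => l; rewrite inE.
split; first by split=> // x i; exact: p1.
move=> x a /=; rewrite -(big_enum_val (fun l => (p x l a)%:C *: G l)).
by apply: eq_bigl => l; rewrite inE.
Qed.

Lemma is_JM_no_input (M : X -> A -> 'M[C]_n) : (X -> False) -> is_JM M.
Proof.
move=> noX; split; first by split=> x; case: (noX x).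
exists 1%N, (fun _ => 1%:M), (fun _ _ _ => 0).
split; first by move=> _; exact: psd1.
split; first by rewrite big_ord1.
by split; [split|]=> x; case: (noX x).
Qed.

Lemma is_LHS_sandwich (S rho : 'M[C]_n) (D : X -> A -> 'M[C]_n) :
  psd S -> S *m S = rho -> \tr rho = 1 -> is_JM D ->
  is_LHS (fun x a => S *m D x a *m S) rho.
Proof.
move=> S_psd SS tr1 [[D_psd D1] [k [G [p [G_psd [G1 [p_cond D_eq]]]]]]].
have hS := psd_herm S_psd.
have SGS_psd l : psd (S *m G l *m S) by exact: psd_herm_congr.
have rho_dens : density rho by split; rewrite // -SS -{1}hS; exact: psd_gram.
pose q l := complex.Re (\tr (S *m G l *m S)).
split.
  split=> [x a|]; first exact: psd_herm_congr.
  by split=> // x; rewrite -mulmx_suml -mulmx_sumr D1 mulmx1.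
exists k, q, p, (fun l => normalize_state rho (S *m G l *m S)).
split; first by move=> l; exact: psd_Re_tr_ge0.
split.
  apply: (@complexI R); rewrite raddf_sum /=.
  rewrite rmorph1 -tr1 -SS -{1}(mulmx1 S) -G1 mulmx_sumr mulmx_suml raddf_sum.
  by apply: eq_bigr => l _; rewrite -psd_trE.
split=> //; split; first by move=> l; exact: density_normalize_state.
move=> x a; rewrite D_eq sandwich_sum; apply: eq_bigr => l _.
by rewrite rmorphM mulrC -scalerA /q normalize_stateK.
Qed.

Lemma is_JM_unsandwich (S rho : 'M[C]_n) (tau : X -> A -> 'M[C]_n) :
  psd S -> S *m S = rho -> S \in unitmx -> is_LHS tau rho ->
  is_JM (fun x a => invmx S *m tau x a *m invmx S).
Proof.
move=> S_psd SS S_unit [[_ [tau1 _]] [k [q [p [rl [q_ge0 [_ [p_cond [rl_dens tau_eq]]]]]]]]].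
case: (pickP (xpredT : pred X)) => [x0 _|noX]; last by apply: is_JM_no_input => x; have := noX x.
set Si := invmx S.
have hSi : adjm Si = Si by rewrite adjmV psd_herm.
pose G l := (q l)%:C *: (Si *m rl l *m Si).
have G_psd l : psd (G l).
  by apply: psdZ => //; apply: psd_herm_congr => //; case: (rl_dens l).
have rho_eq : \sum_l (q l)%:C *: rl l = rho.
  rewrite -(tau1 x0) (eq_bigr _ (fun a _ => tau_eq x0 a)) exchange_big /=.
  apply: eq_bigr => l _; under eq_bigr do rewrite rmorphM -scalerA.
  by rewrite -scaler_sumr -scaler_suml -raddf_sum (proj2 p_cond) scale1r.
have G1 : \sum_l G l = 1%:M.
  by rewrite -sandwich_sum rho_eq -SS mulmxA mulVmx // mul1mx mulmxV.
have -> : (fun x a => Si *m tau x a *m Si) =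
          (fun x a => \sum_l (p x l a)%:C *: G l).
  apply: funext => x; apply: funext => a; rewrite tau_eq sandwich_sum.
  by apply: eq_bigr => l _; rewrite /G scalerA -rmorphM mulrC.
exact: is_JM_mixture.
Qed.

Definition query_or_default (a0 : A) (x : X) (l : X * A) (a : A) : R :=
  if l.1 == x then (a == l.2)%:R else (a == a0)%:R.

Lemma cond_prob_query_or_default (a0 : A) : cond_prob (query_or_default a0).
Proof.
split=> [x l a|x l]; rewrite /query_or_default; first by case: ifP.
by case: (l.1 == x); [rewrite (bigD1 l.2) | rewrite (bigD1 a0)] => //=;
  rewrite eqxx big1 ?addr0 // => b /negbTE; rewrite eq_sym => ->.
Qed.

Lemma sum_query_or_default (B : X -> A -> 'M[C]_n) (a0 : A) (x : X) (a : A) :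
  (forall y, \sum_b B y b = 1%:M) ->
  \sum_(l : X * A) (query_or_default a0 x l a)%:C *: B l.1 l.2 =
  B x a + (#|X|.-1)%:R%:C *: (((a == a0)%:R : R)%:C *: 1%:M).
Proof.
move=> B1; rewrite -(pair_bigA _ (fun y b => (query_or_default a0 x (y, b) a)%:C *: B y b)).
rewrite (bigD1 x) //= /query_or_default /= eqxx; congr (_ + _).
  rewrite (bigD1 a) //= eqxx scale1r big1 ?addr0 // => b ba.
  by rewrite eq_sym (negbTE ba) scale0r.
rewrite (eq_bigr (fun _ => ((a == a0)%:R : R)%:C *: 1%:M)).
  by rewrite sumr_const cardC1 -scaler_nat; congr (_ *: _); rewrite rmorph_nat.
by move=> y /negbTE yx; rewrite yx -scaler_sumr B1.
Qed.

End Assemblages.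

Lemma mulmx_mix n (S T M N : 'M[C]_n) (c d : C) :
  S *m (c *: (M + d *: N)) *m T = c *: (S *m M *m T + d *: (S *m N *m T)).
Proof.
by rewrite -scalemxAr -scalemxAl mulmxDr mulmxDl -scalemxAr -scalemxAl.
Qed.

Definition IR_feasible n (X A : finType) (M : X -> A -> 'M[C]_n) (t : R) : Prop :=
  0 <= t /\ exists D' D : X -> A -> 'M[C]_n, is_JM D' /\ is_JM D /\
    forall x a, ((1 + t)^-1)%:C *: (M x a + t%:C *: D' x a) = D x a.

Definition SR_feasible n (X A : finType) (sig : X -> A -> 'M[C]_n)
    (rho : 'M[C]_n) (t : R) : Prop :=
  0 <= t /\ exists tau' tau : X -> A -> 'M[C]_n, is_LHS tau' rho /\ is_LHS tau rho /\
    forall x a, ((1 + t)^-1)%:C *: (sig x a + t%:C *: tau' x a) = tau x a.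

Lemma inf_le_subset (E F : set R) :
  (exists t, E t) -> has_lbound F -> (forall t, E t -> F t) -> inf F <= inf E.
Proof.
by move=> E0 F_lb EF; apply: lb_le_inf E0 _ => t Et; exact: ge_inf F_lb _ (EF t Et).
Qed.

Section Feasibility.
Variables (n : nat) (X A : finType) (B : X -> A -> 'M[C]_n).

Lemma IR_feasible_sandwich rho t :
  density rho -> IR_feasible B t -> SR_feasible (sandwich rho B) rho t.
Proof.
move=> [rho_psd tr1] [t_ge0 [D' [D [D'_JM [D_JM D_eq]]]]].
have [S_psd SS] := psd_sqrtP rho_psd.
split=> //; exists (sandwich rho D'), (sandwich rho D).
split; first exact: is_LHS_sandwich.
split; first exact: is_LHS_sandwich.
by move=> x a; rewrite /sandwich -D_eq mulmx_mix.
Qed.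

Lemma SR_feasible_unsandwich rho t : density rho -> \rank rho = n ->
  SR_feasible (sandwich rho B) rho t -> IR_feasible B t.
Proof.
move=> [rho_psd tr1] rho_rank [t_ge0 [tau' [tau [tau'_LHS [tau_LHS tau_eq]]]]].
have [S_psd SS] := psd_sqrtP rho_psd.
set S := psd_sqrt rho in S_psd SS tau_eq.
have S_unit : S \in unitmx.
  have : rho \in unitmx by rewrite -row_free_unit /row_free rho_rank.
  by rewrite -SS unitmx_mul => /andP[].
split=> //; exists (fun x a => invmx S *m tau' x a *m invmx S).
exists (fun x a => invmx S *m tau x a *m invmx S).
split; first exact: is_JM_unsandwich tau'_LHS.
split; first exact: is_JM_unsandwich tau_LHS.
move=> x a; rewrite -tau_eq mulmx_mix /sandwich -/S.
by rewrite !mulmxA mulVmx // mul1mx mulmxK.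
Qed.

End Feasibility.

(* [B] mixed with [|X| - 1] copies of the trivial assemblage answering [a0] is
   [|X|] times the jointly measurable assemblage that measures [B_(.|y)] for a
   uniformly random input [y], reports its outcome if [y] is the actual input
   and answers [a0] otherwise ([query_or_default]). *)
Lemma IR_feasible_card n (X A : finType) (B : X -> A -> 'M[C]_n.+1) :
  is_MA B -> IR_feasible B (#|X|.-1)%:R.
Proof.
move=> [B_psd B1].
case: (pickP (xpredT : pred X)) => [x0 _|noX]; last first.
  have -> : #|X| = 0%N by apply: eq_card0.
  have {}noX : X -> False by move=> x; have := noX x.
  split=> //; exists B, B.
  by split; [|split]; [exact: is_JM_no_input.. | move=> x; case: (noX x)].
case: (pickP (xpredT : pred A)) => [a0 _|noA]; last first.
  move: (B1 x0); rewrite big_pred0 // => /matrixP/(_ 0 0)/eqP.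
  by rewrite !mxE eqxx eq_sym oner_eq0.
pose m : R := #|X|%:R.
have m_gt0 : 0 < m by rewrite ltr0n; apply/card_gt0P; exists x0.
pose G (l : X * A) := (m^-1)%:C *: B l.1 l.2.
have G_psd l : psd (G l) by apply: psdZ; rewrite ?invr_ge0 ?ltW.
have G1 : \sum_l G l = 1%:M.
  rewrite -scaler_sumr -(pair_bigA _ B) (eq_bigr _ (fun y _ => B1 y)) sumr_const.
  rewrite -scaler_nat scalerA -(rmorph_nat (real_complex R)) -rmorphM mulVf.
    by rewrite (rmorph1 (real_complex R)) scale1r.
  exact: lt0r_neq0.
pose answer_a0 (x : X) (l : 'I_1) (a : A) := ((a == a0)%:R : R).
have answer_a0_cond : cond_prob answer_a0.
  split=> // x l; rewrite /answer_a0 (bigD1 a0) //= eqxx big1 ?addr0 //.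
  by move=> a /negbTE ->.
split; first exact: ler0n.
exists (fun x a => \sum_(l < 1) (answer_a0 x l a)%:C *: 1%:M).
exists (fun x a => \sum_l (query_or_default a0 x l a)%:C *: G l).
split; first exact: (is_JM_mixture (fun _ => psd1 _) (big_ord1 _ _) answer_a0_cond).
split; first by apply: is_JM_mixture => //; exact: cond_prob_query_or_default.
have t1 : 1 + (#|X|.-1)%:R = m.
  by rewrite addrC natr1 prednK //; apply/card_gt0P; exists x0.
move=> x a; rewrite big_ord1 t1.
under eq_bigr do rewrite /G scalerA mulrC -scalerA.
by rewrite -scaler_sumr sum_query_or_default.
Qed.

Lemma maximally_mixed_state n :
  exists rho : 'M[C]_n.+1, density rho /\ \rank rho = n.+1.
Proof.
pose c : R := n.+1%:R^-1.
have c_neq0 : c != 0 by rewrite invr_eq0 pnatr_eq0.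
exists (c%:C *: 1%:M); split.
  split; first by apply: psdZ; [rewrite invr_ge0 ler0n | exact: psd1].
  rewrite mxtraceZ mxtrace1 -(rmorph_nat (real_complex R)) -rmorphM mulVf.
    exact: (rmorph1 (real_complex R)).
  by rewrite pnatr_eq0.
apply: mxrank_unit; rewrite scalemx1 unitmxE det_scalar unitrX // unitfE.
by rewrite fmorph_eq0.
Qed.

End Robustness.

Theorem lemma1 (R : realType) (n : nat) (X A : finType)
    (B : X -> A -> 'M[R[i]]_n.+1) :
  is_MA B ->
  (forall rho : 'M[R[i]]_n.+1, density rho ->
     SR_CLHS (sandwich rho B) rho <= IR_JM B) /\
  (exists rho : 'M[R[i]]_n.+1, density rho /\
     SR_CLHS (sandwich rho B) rho = IR_JM B) /\
  (forall rho : 'M[R[i]]_n.+1, density rho -> \rank rho = n.+1 ->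
     SR_CLHS (sandwich rho B) rho = IR_JM B).
Proof.
move=> B_MA; have IR_ne := ex_intro _ _ (IR_feasible_card B_MA).
have SR_le rho : density rho -> SR_CLHS (sandwich rho B) rho <= IR_JM B.
  move=> rho_dens; apply: inf_le_subset IR_ne _ _; first by exists 0 => t [].
  by move=> t; exact: IR_feasible_sandwich.
have SR_eq rho : density rho -> \rank rho = n.+1 ->
    SR_CLHS (sandwich rho B) rho = IR_JM B.
  move=> rho_dens rho_rank; apply/eqP; rewrite eq_le SR_le //=.
  have [t /(IR_feasible_sandwich rho_dens) SR_t] := IR_ne.
  apply: inf_le_subset; [by exists t | by exists 0 => ? [] |].
  by move=> t'; exact: SR_feasible_unsandwich.
split=> //; split=> //.
have [rho [rho_dens rho_rank]] := maximally_mixed_state R n.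
by exists rho; split=> //; exact: SR_eq.
Qed.
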